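(* Let $\iota:\mathcal{Q}\to\mathcal{P}$ be an aligned grid inclusion with $\mathcal{P},\mathcal{Q}$ finite and $\uparrow\iota(\mathcal{Q})=\mathcal{P}$. The functor $\mathrm{Lan}_\iota:\operatorname{rep}\mathcal{Q}\to\operatorname{rep}\mathcal{P}$, $N\mapsto N\circ\lfloor-\rfloor_\iota$, has a left adjoint $\mathrm{C}:\operatorname{rep}\mathcal{P}\to\operatorname{rep}\mathcal{Q}$, and for all $A,B\subseteq\mathcal{P}$ such that every $b\in B$ satisfies $a\le b$ for some $a\in A$, \[ \mathrm{C}\big(\mathbb{k}_{\uparrow A\setminus\uparrow B}\big)\cong\mathbb{k}_{\uparrow\lfloor A\rfloor_\iota\setminus\uparrow\lfloor B\rfloor_\iota}. \] In particular $\mathrm{C}$ maps spread-decomposable representations to spread-decomposable representations.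
   Context: Fix a field $\mathbb{k}$. Grid poset: finite product of total orders with product order. Aligned grid inclusion: a product $\iota_1\times\cdots\times\iota_n$ of injective order-preserving maps of total orders. $\uparrow X=\{p:\exists x\in X, x\le p\}$; $\lfloor p\rfloor_\iota:=\bigvee\{q\in\mathcal{Q}:\iota(q)\le p\}$ and $\lfloor X\rfloor_\iota=\{\lfloor x\rfloor_\iota:x\in X\}$. For a finite poset, $\operatorname{rep}$ denotes functors to finite-dimensional $\mathbb{k}$-vector spaces. $\mathbb{k}_S$ is the indicator representation of a convex set $S$. A spread is a nonempty convex zigzag-connected subset; spread-decomposable means isomorphic to a finite direct sum of spread representations. *)

From HB Require Import structures.
From mathcomp Require Import all_boot all_order all_algebra.
Set Implicit Arguments. Unset Strict Implicit. Unset Printing Implicit Defensive.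
Import GRing.Theory.
Local Open Scope ring_scope.

(* ---------- Representations of a finite poset (T, le) over a field F ----------
   A representation is given by a finite dimension at every point and, for
   every pair p <= q, the matrix of the structure map V_p -> V_q
   (MathComp row-vector convention: v |-> v *m rmap p q, so composition
   p -> q -> r is rmap p q *m rmap q r).  Maps at incomparable pairs are
   irrelevant (never inspected). *)

Record repd (F : fieldType) (T : finType) := RepD {
  rdim : T -> nat;
  rmap : forall p q : T, 'M[F]_(rdim p, rdim q) }.

Definition is_rep (F : fieldType) (T : finType) (le : rel T) (M : repd F T) :=
  (forall p, rmap M p p = 1%:M) /\
  (forall p q r, le p q -> le q r -> rmap M p r = rmap M p q *m rmap M q r).

Definition is_hom (F : fieldType) (T : finType) (le : rel T) (M N : repd F T)
  (f : forall p, 'M[F]_(rdim M p, rdim N p)) :=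
  forall p q, le p q -> rmap M p q *m f q = f p *m rmap N p q.

Definition rep_iso (F : fieldType) (T : finType) (le : rel T) (M N : repd F T) :=
  exists (f : forall p, 'M[F]_(rdim M p, rdim N p))
         (g : forall p, 'M[F]_(rdim N p, rdim M p)),
    [/\ is_hom le f, is_hom le g,
        forall p, f p *m g p = 1%:M & forall p, g p *m f p = 1%:M].

(* indicator representation k_S: k at points of S, 0 elsewhere, identities
   between points of S (const_mx 1 is the 1x1 identity when both points are
   in S, and an empty matrix otherwise). *)
Definition krep (F : fieldType) (T : finType) (S : {set T}) : repd F T :=
  @RepD F T (fun p => nat_of_bool (p \in S)) (fun p q => const_mx 1).

Definition rep0 (F : fieldType) (T : finType) : repd F T :=
  @RepD F T (fun _ => 0%N) (fun p q => 0).

Definition rep_dsum (F : fieldType) (T : finType) (M N : repd F T) : repd F T :=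
  @RepD F T (fun p => (rdim M p + rdim N p)%N)
    (fun p q => block_mx (rmap M p q) 0 0 (rmap N p q)).

Definition rep_bigsum (F : fieldType) (T : finType) (s : seq (repd F T)) :=
  foldr (@rep_dsum F T) (rep0 F T) s.

Definition convex (T : finType) (le : rel T) (S : {set T}) :=
  forall a b c, a \in S -> c \in S -> le a b -> le b c -> b \in S.

Definition zigzag_connected (T : finType) (le : rel T) (S : {set T}) :=
  forall x y, x \in S -> y \in S ->
    connect (fun u v => [&& u \in S, v \in S & le u v || le v u]) x y.

Definition spread (T : finType) (le : rel T) (S : {set T}) :=
  [/\ S != set0, convex le S & zigzag_connected le S].

Definition spread_decomposable (F : fieldType) (T : finType) (le : rel T)
  (M : repd F T) :=
  exists ss : seq {set T}, (forall X, X \in ss -> spread le X) /\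
    rep_iso le M (rep_bigsum [seq krep F X | X <- ss]).

Definition upset (T : finType) (le : rel T) (X : {set T}) : {set T} :=
  [set p | [exists x in X, le x p]].

Definition is_join (T : finType) (le : rel T) (S : pred T) (x : T) :=
  (forall q, S q -> le q x) /\ (forall y, (forall q, S q -> le q y) -> le x y).

Definition gpt (n : nat) (m : 'I_n -> nat) := {dffun forall i : 'I_n, 'I_(m i)}.

Definition gle (n : nat) (m : 'I_n -> nat) : rel (gpt m) :=
  fun p q => [forall i, (p i <= q i)%N].

Definition gincl (n : nat) (mQ mP : 'I_n -> nat)
  (iota : forall i, 'I_(mQ i) -> 'I_(mP i)) (q : gpt mQ) : gpt mP :=
  [ffun i => iota i (q i)].

Definition aligned_grid_inclusion (n : nat) (mQ mP : 'I_n -> nat)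
  (iota : forall i, 'I_(mQ i) -> 'I_(mP i)) :=
  forall i, injective (iota i) /\
            (forall a b : 'I_(mQ i), (a <= b)%N -> (iota i a <= iota i b)%N).

Definition is_floor (n : nat) (mQ mP : 'I_n -> nat)
  (iota : forall i, 'I_(mQ i) -> 'I_(mP i)) (fl : gpt mP -> gpt mQ) :=
  forall p, is_join (@gle n mQ) (fun q => gle (gincl iota q) p) (fl p).

Definition Lan (F : fieldType) (TQ TP : finType) (fl : TP -> TQ)
  (N : repd F TQ) : repd F TP :=
  @RepD F TP (fun p => rdim N (fl p)) (fun p q => rmap N (fl p) (fl q)).

(* C (on objects) together with a unit eta : M -> Lan (C M) is a left adjoint
   of Lan: (C M, eta M) is a universal arrow from M to Lan, for every M. *)
Definition left_adjoint_of_Lan (F : fieldType) (TQ TP : finType)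
  (leQ : rel TQ) (leP : rel TP) (fl : TP -> TQ)
  (C : repd F TP -> repd F TQ)
  (eta : forall M : repd F TP, forall p, 'M[F]_(rdim M p, rdim (C M) (fl p))) :=
  forall M, is_rep leP M ->
    [/\ is_rep leQ (C M),
        @is_hom F TP leP M (Lan fl (C M)) (eta M) &
        forall N, is_rep leQ N ->
        forall f : forall p, 'M[F]_(rdim M p, rdim N (fl p)),
          @is_hom F TP leP M (Lan fl N) f ->
          exists g : forall q, 'M[F]_(rdim (C M) q, rdim N q),
            [/\ is_hom leQ g,
                forall p, eta M p *m g (fl p) = f p &
                forall g' : forall q, 'M[F]_(rdim (C M) q, rdim N q),
                  is_hom leQ g' -> (forall p, eta M p *m g' (fl p) = f p) ->
                  forall q, g' q = g q]].

From HB Require Import structures.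
From mathcomp Require Import all_boot all_order all_algebra.
Set Implicit Arguments. Unset Strict Implicit. Unset Printing Implicit Defensive.
Import Order.TTheory GRing.Theory.
Local Open Scope ring_scope.

(* Coordinatewise, the floor map fl has a right adjoint c (send q to the
   largest point whose floor is below q), so fl p <= q iff p <= c q.  Hence
   restriction along c is left adjoint to Lan = restriction along fl, and
   C M is M o c up to isomorphism.  Restriction along c sends k_S to
   k_(c^-1 S), preimages under the monotone c stay convex, and
   c^-1 (up A) = up (fl A).  Finally the indicator of a convex set is the
   direct sum of the indicators of its zigzag components, which are spreads. *)

Section Matrices.
Variable F : fieldType.

Lemma nrows0_mx_eq m n (A B : 'M[F]_(m, n)) : m = 0%N -> A = B.
Proof. by move=> m0; move: A B; rewrite m0 => A B; rewrite (flatmx0 A) (flatmx0 B). Qed.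

Lemma const_mx1_mul m n k :
  (const_mx 1 : 'M[F]_(m, n)) *m (const_mx 1 : 'M[F]_(n, k)) = const_mx n%:R.
Proof.
apply/matrixP=> i j; rewrite !mxE; under eq_bigr do rewrite !mxE mulr1.
by rewrite sumr_const card_ord.
Qed.

Lemma bool_const_mx_eq (b1 b2 : bool) (x y : F) : (b1 -> b2 -> x = y) ->
  (const_mx x : 'M[F]_(b1, b2)) = const_mx y.
Proof.
case: b1 => [|_]; last exact: nrows0_mx_eq.
by case: b2 => [-> // | _]; rewrite (thinmx0 (const_mx x)) (thinmx0 (const_mx y)).
Qed.

Lemma const_mx_eq1 (k : nat) (x : F) : (k <= 1)%N -> ((0 < k)%N -> x = 1) ->
  (const_mx x : 'M[F]_k) = 1%:M.
Proof.
case: k => [_ _|[|//] _ x1]; first exact: nrows0_mx_eq.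
by apply/matrixP=> i j; rewrite !mxE !ord1 eqxx x1.
Qed.

Lemma bool_const_mx1 (b : bool) (x : F) : (b -> x = 1) ->
  (const_mx x : 'M[F]_b) = 1%:M.
Proof. by move=> x1; apply: const_mx_eq1 => [|/[!lt0b]//]; apply: leq_b1. Qed.

Lemma castmx_mul m m' n n' k k' (em : m = m') (en : n = n') (ek : k = k')
    (A : 'M[F]_(m, n)) (B : 'M[F]_(n, k)) :
  castmx (em, en) A *m castmx (en, ek) B = castmx (em, ek) (A *m B).
Proof. by case: m' / em; case: n' / en; case: k' / ek; rewrite !castmx_id. Qed.

Lemma castmx_scalar1 n n' (e : n = n') : castmx (e, e) (1%:M : 'M[F]_n) = 1%:M.
Proof. by case: n' / e; rewrite castmx_id. Qed.

End Matrices.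

Section RepresentationIsomorphisms.
Variables (F : fieldType) (T : finType) (le : rel T).

Lemma is_hom1 (M : repd F T) : is_hom le (fun p => (1%:M : 'M_(rdim M p))).
Proof. by move=> p q _; rewrite mulmx1 mul1mx. Qed.

Lemma is_hom_mul (M N R : repd F T) (f : forall p, 'M_(rdim M p, rdim N p))
    (g : forall p, 'M_(rdim N p, rdim R p)) :
  is_hom le f -> is_hom le g -> is_hom le (fun p => f p *m g p).
Proof. by move=> hf hg p q lpq; rewrite mulmxA hf // -mulmxA hg // mulmxA. Qed.

Lemma rep_iso_refl (M : repd F T) : rep_iso le M M.
Proof.
exists (fun p => 1%:M), (fun p => 1%:M).
by split=> [||p|p]; rewrite ?mulmx1 //; apply: is_hom1.
Qed.

Lemma rep_iso_trans (M N R : repd F T) :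
  rep_iso le M N -> rep_iso le N R -> rep_iso le M R.
Proof.
move=> [f [g [hf hg fg gf]]] [f' [g' [hf' hg' fg' gf']]].
exists (fun p => f p *m f' p), (fun p => g' p *m g p); split; try exact: is_hom_mul.
- by move=> p; rewrite mulmxA -(mulmxA (f p)) fg' mulmx1 fg.
- by move=> p; rewrite mulmxA -(mulmxA (g' p)) gf mulmx1 gf'.
Qed.

Lemma rep_iso_dim0 (M N : repd F T) :
  (forall p, rdim M p = 0%N) -> (forall p, rdim N p = 0%N) -> rep_iso le M N.
Proof.
move=> M0 N0; exists (fun p => 0), (fun p => 0).
by split=> [p q _|p q _|p|p]; apply: nrows0_mx_eq.
Qed.

Lemma rep_iso_dsum (M M' N N' : repd F T) :
  rep_iso le M M' -> rep_iso le N N' -> rep_iso le (rep_dsum M N) (rep_dsum M' N').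
Proof.
move=> [f [g [hf hg fg gf]]] [f' [g' [hf' hg' fg' gf']]].
exists (fun p => block_mx (f p) 0 0 (f' p)), (fun p => block_mx (g p) 0 0 (g' p)).
split=> [p q lpq|p q lpq|p|p] /=;
  rewrite !mulmx_block !mulmx0 !mul0mx !addr0 !add0r.
- by rewrite hf ?hf'.
- by rewrite hg ?hg'.
- by rewrite fg fg' -scalar_mx_block.
- by rewrite gf gf' -scalar_mx_block.
Qed.

Lemma rep_iso_castmx (M N : repd F T) (e : forall p, rdim M p = rdim N p) :
  (forall p q, rmap N p q = castmx (e p, e q) (rmap M p q)) -> rep_iso le M N.
Proof.
move=> castN.
exists (fun p => castmx (erefl, e p) 1%:M), (fun p => castmx (e p, erefl) 1%:M).
split=> [p q _|p q _|p|p].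
- rewrite castN castmx_mul mul1mx.
  by rewrite -[X in X *m _](castmx_id (erefl, erefl)) castmx_mul mulmx1.
- rewrite castN castmx_mul mulmx1.
  by rewrite -[X in _ = _ *m X](castmx_id (erefl, erefl)) castmx_mul mul1mx.
- by rewrite castmx_mul mulmx1 castmx_id.
- by rewrite castmx_mul mulmx1 castmx_scalar1.
Qed.

Lemma rep_iso_dsumA (M N R : repd F T) :
  rep_iso le (rep_dsum (rep_dsum M N) R) (rep_dsum M (rep_dsum N R)).
Proof.
apply: (@rep_iso_castmx (rep_dsum (rep_dsum M N) R) (rep_dsum M (rep_dsum N R))
  (fun p => esym (addnA (rdim M p) (rdim N p) (rdim R p)))).
move=> p q /=.
have := block_mxA (A11 := rmap M p q) (A12 := 0) (A13 := 0) (A21 := 0)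
  (A22 := rmap N p q) (A23 := 0) (A31 := 0) (A32 := 0) (A33 := rmap R p q).
by rewrite /= !row_mx0 !col_mx0 => ->; apply: eq_castmx.
Qed.

Lemma rep_iso_dsum0r (M : repd F T) : rep_iso le (rep_dsum (rep0 F T) M) M.
Proof.
exists (fun p => col_mx 0 1%:M), (fun p => row_mx 0 1%:M).
split=> [p q _|p q _|p|p] /=.
- by rewrite mul_block_col mul_col_mx !(mulmx0, mul0mx, addr0, add0r, mulmx1, mul1mx).
- by rewrite mul_row_block mul_mx_row !(mulmx0, mul0mx, addr0, add0r, mulmx1, mul1mx).
- rewrite mul_col_row !(mulmx0, mul0mx, mul1mx) [RHS]scalar_mx_block.
  by congr block_mx; apply: nrows0_mx_eq.
- by rewrite mul_row_col mulmx0 add0r mulmx1.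
Qed.

Lemma rep_iso_bigsum_cat (s1 s2 : seq (repd F T)) :
  rep_iso le (rep_dsum (rep_bigsum s1) (rep_bigsum s2)) (rep_bigsum (s1 ++ s2)).
Proof.
elim: s1 => [|M s1 IH] /=; first exact: rep_iso_dsum0r.
exact: rep_iso_trans (rep_iso_dsumA _ _ _) (rep_iso_dsum (rep_iso_refl _) IH).
Qed.

End RepresentationIsomorphisms.

Section IndicatorRepresentations.
Variables (F : fieldType) (T : finType) (le : rel T).

(* [krep F S] is [kpred (mem S)] up to conversion; predicates are needed
   because restrictions of indicators are indicators of predicates. *)
Definition kpred (P : pred T) : repd F T :=
  @RepD F T (fun p => nat_of_bool (P p)) (fun p q => const_mx 1).

Lemma rep_iso_kpred (P P' : pred T) : P =1 P' -> rep_iso le (kpred P) (kpred P').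
Proof.
move=> eqP; exists (fun p => const_mx 1), (fun p => const_mx 1).
split=> [p q _|p q _|p|p] /=; rewrite !const_mx1_mul;
  (apply: bool_const_mx_eq || apply: bool_const_mx1); by rewrite !eqP => -> //->.
Qed.

Lemma krep_is_rep (S : {set T}) : convex le S -> is_rep le (krep F S).
Proof.
move=> convS; split=> [p|p q r lpq lqr] /=; first exact: bool_const_mx1.
by rewrite const_mx1_mul; apply: bool_const_mx_eq => Sp Sr; rewrite (convS p q r).
Qed.

Lemma krep_split (Y K : {set T}) : K \subset Y ->
  (forall p q, p \in Y -> q \in Y -> le p q -> (p \in K) = (q \in K)) ->
  rep_iso le (krep F Y) (rep_dsum (krep F K) (krep F (Y :\: K))).
Proof.
move=> /subsetP KY closedK.
have inYK p : p \in K -> p \in Y by apply: KY.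
exists (fun p => const_mx 1), (fun p => const_mx 1).
split=> [p q lpq|p q lpq|p|p] /=; rewrite const_mx1_mul.
- rewrite -[X in X *m _]row_mx_const mul_row_block !mulmx0 addr0 add0r.
  rewrite !const_mx1_mul -row_mx_const; congr row_mx; apply: bool_const_mx_eq.
  + by move=> Yp Kq; have Yq := inYK _ Kq; rewrite (closedK p q) // Kq Yq.
  + by move=> Yp /setDP [Yq Kq]; rewrite inE (closedK p q) // Yp Yq (negPf Kq).
- rewrite -[X in _ *m X]col_mx_const mul_block_col !mul0mx addr0 add0r.
  rewrite !const_mx1_mul -col_mx_const; congr col_mx; apply: bool_const_mx_eq.
  + by move=> Kp Yq; have Yp := inYK _ Kp; rewrite -(closedK p q) // Kp Yp.
  + by move=> /setDP [Yp Kp] Yq; rewrite inE -(closedK p q) // Yp Yq (negPf Kp).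
- apply: bool_const_mx1; rewrite inE.
  by case: (boolP (p \in K)) => [/inYK -> | _ ->].
- apply: const_mx_eq1; rewrite inE;
    by case: (boolP (p \in K)) => [/inYK -> | _]; case: (p \in Y).
Qed.

End IndicatorRepresentations.

Section SpreadDecomposition.
Variables (F : fieldType) (T : finType) (le : rel T).

Definition zigzag_step (Y : {set T}) : rel T :=
  fun u v => [&& u \in Y, v \in Y & le u v || le v u].

Definition zigzag_component (Y : {set T}) (y : T) : {set T} :=
  [set z | connect (zigzag_step Y) y z].

Lemma zigzag_step_sym Y : symmetric (zigzag_step Y).
Proof. by move=> u v; rewrite /zigzag_step andbCA orbC. Qed.

Section Component.
Variables (Y : {set T}) (y : T).
Hypotheses (convY : convex le Y) (Yy : y \in Y).
Local Notation K := (zigzag_component Y y).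

Lemma mem_zigzag_component : y \in K.
Proof. by rewrite inE connect0. Qed.

Lemma zigzag_component_sub : K \subset Y.
Proof.
apply/subsetP=> z; rewrite inE => /connectP [s s_path ->] {z}.
by elim: s y Yy s_path => //= u s IHs x _ /andP [/and3P [_ Yu _]]; apply: IHs.
Qed.

Lemma zigzag_component_closed u v : u \in K -> v \in Y -> le u v || le v u ->
  v \in K.
Proof.
move=> Ku Yv luv; have Yu := subsetP zigzag_component_sub u Ku.
by move: Ku; rewrite !inE => /connect_trans; apply; apply: connect1; apply/and3P.
Qed.

Lemma zigzag_component_spread : spread le K.
Proof.
split; first by apply/set0Pn; exists y; apply: mem_zigzag_component.
  move=> a b c Ka Kc lab lbc; apply: (zigzag_component_closed Ka); last by rewrite lab.
  by apply: convY lab lbc; apply: (subsetP zigzag_component_sub).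
have from_y z : z \in K -> connect (zigzag_step K) y z.
  rewrite inE => /connectP [s s_path ->].
  apply/connectP; exists s => //; apply: (sub_in_path (P := [pred w | w \in K]) _ _ s_path).
    by move=> u v Ku Kv /and3P [_ _ luv]; apply/and3P.
  by apply/allP => w /(path_connect s_path) yw; rewrite !inE.
move=> x z /from_y yx /from_y yz.
rewrite (sym_connect_sym (zigzag_step_sym K)) in yx.
exact: connect_trans yx yz.
Qed.

Lemma convex_setD_zigzag_component : convex le (Y :\: K).
Proof.
move=> a b c /setDP [Ya Ka] /setDP [Yc _] lab lbc; have Yb := convY Ya Yc lab lbc.
apply/setDP; split=> //; apply: contra Ka => Kb.
by apply: zigzag_component_closed Kb Ya _; rewrite lab orbT.
Qed.

Lemma krep_split_zigzag_component :
  rep_iso le (krep F Y) (rep_dsum (krep F K) (krep F (Y :\: K))).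
Proof.
apply: krep_split zigzag_component_sub _ => p q Yp Yq lpq.
apply/idP/idP => [Kp|Kq].
  by apply: zigzag_component_closed Kp Yq _; rewrite lpq.
by apply: zigzag_component_closed Kq Yp _; rewrite lpq orbT.
Qed.

End Component.

Lemma spread_decomposable_iso (M N : repd F T) :
  rep_iso le M N -> spread_decomposable le N -> spread_decomposable le M.
Proof. by move=> MN [ss [spread_ss Nss]]; exists ss; split; last exact: rep_iso_trans Nss. Qed.

Lemma spread_decomposable_dsum (M N : repd F T) :
  spread_decomposable le M -> spread_decomposable le N ->
  spread_decomposable le (rep_dsum M N).
Proof.
move=> [ss [spread_ss Mss]] [ts [spread_ts Nts]]; exists (ss ++ ts); split.
  by move=> X; rewrite mem_cat => /orP [/spread_ss|/spread_ts].
rewrite map_cat; apply: rep_iso_trans (rep_iso_bigsum_cat _ _ _).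
exact: rep_iso_dsum.
Qed.

Lemma spread_decomposable_bigsum (I : eqType) (f : I -> repd F T) (s : seq I) :
  (forall i, i \in s -> spread_decomposable le (f i)) ->
  spread_decomposable le (rep_bigsum (map f s)).
Proof.
elim: s => [_|i s IHs sd_s] /=; first by exists [::]; split=> //; apply: rep_iso_refl.
apply: spread_decomposable_dsum; first by apply: sd_s; rewrite mem_head.
by apply: IHs => j sj; apply: sd_s; rewrite inE sj orbT.
Qed.

Lemma krep_convex_spread_decomposable (Y : {set T}) :
  convex le Y -> spread_decomposable le (krep F Y).
Proof.
have [k] := ubnP #|Y|; elim: k Y => // k IHk Y /ltnSE cardY convY.
have [->|[y Yy]] := set_0Vmem Y.
  by exists [::]; split=> //; apply: rep_iso_dim0 => p //=; rewrite inE.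
set K := zigzag_component Y y.
have ltYK : (#|Y :\: K| < k)%N.
  apply: leq_trans cardY; apply/proper_card/properP; split; first exact: subsetDl.
  by exists y; rewrite // inE mem_zigzag_component.
have [ks [spread_ks YKks]] := IHk _ ltYK (convex_setD_zigzag_component convY Yy).
exists (K :: ks); split.
  move=> X; rewrite inE => /orP [/eqP -> |]; last exact: spread_ks.
  exact: zigzag_component_spread.
apply: rep_iso_trans (krep_split_zigzag_component Yy) _.
exact: rep_iso_dsum (rep_iso_refl _ _) YKks.
Qed.

End SpreadDecomposition.

Section LeftAdjointUniqueness.
Variables (F : fieldType) (TP TQ : finType) (leP : rel TP) (leQ : rel TQ).
Variable fl : TP -> TQ.

Lemma left_adjoint_of_Lan_unique (C1 C2 : repd F TP -> repd F TQ)
    (eta1 : forall M : repd F TP, forall p, 'M[F]_(rdim M p, rdim (C1 M) (fl p)))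
    (eta2 : forall M : repd F TP, forall p, 'M[F]_(rdim M p, rdim (C2 M) (fl p))) :
  left_adjoint_of_Lan leQ leP eta1 -> left_adjoint_of_Lan leQ leP eta2 ->
  forall M, is_rep leP M -> rep_iso leQ (C1 M) (C2 M).
Proof.
move=> adj1 adj2 M repM.
have [rep1 hom1 univ1] := adj1 M repM; have [rep2 hom2 univ2] := adj2 M repM.
have [g [hom_g eta_g _]] := univ1 _ rep2 _ hom2.
have [h [hom_h eta_h _]] := univ2 _ rep1 _ hom1.
have [k1 [_ _ uniq1]] := univ1 _ rep1 _ hom1.
have [k2 [_ _ uniq2]] := univ2 _ rep2 _ hom2.
exists g, h; split=> // q.
- rewrite (uniq1 (fun q => g q *m h q)) ?(uniq1 (fun q => 1%:M)) //.
  + exact: is_hom1.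
  + by move=> p; rewrite mulmx1.
  + exact: is_hom_mul.
  + by move=> p; rewrite mulmxA eta_g eta_h.
- rewrite (uniq2 (fun q => h q *m g q)) ?(uniq2 (fun q => 1%:M)) //.
  + exact: is_hom1.
  + by move=> p; rewrite mulmx1.
  + exact: is_hom_mul.
  + by move=> p; rewrite mulmxA eta_h eta_g.
Qed.

End LeftAdjointUniqueness.

Section Restriction.
Variables (F : fieldType) (TP TQ : finType) (leP : rel TP) (leQ : rel TQ).
Variable c : TQ -> TP.
Hypothesis c_homo : {homo c : q q' / leQ q q' >-> leP q q'}.

Definition restrict (M : repd F TP) : repd F TQ :=
  @RepD F TQ (fun q => rdim M (c q)) (fun q q' => rmap M (c q) (c q')).

Lemma restrict_is_rep M : is_rep leP M -> is_rep leQ (restrict M).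
Proof.
move=> [M1 Mmul]; split=> [q|q q' q'' /c_homo lqq' /c_homo lq'q''] /=.
  exact: M1.
exact: Mmul.
Qed.

Lemma restrict_iso M N : rep_iso leP M N -> rep_iso leQ (restrict M) (restrict N).
Proof.
move=> [f [g [hf hg fg gf]]]; exists (fun q => f (c q)), (fun q => g (c q)).
by split=> [q q' /c_homo|q q' /c_homo|q|q]; [apply: hf|apply: hg|apply: fg|apply: gf].
Qed.

Lemma restrict_bigsum s : restrict (rep_bigsum s) = rep_bigsum (map restrict s).
Proof. by elim: s => //= M s <-. Qed.

Lemma restrict_krep (X : {set TP}) :
  rep_iso leQ (restrict (krep F X)) (krep F (c @^-1: X)).
Proof.
change (rep_iso leQ (kpred F (fun q => c q \in X)) (kpred F (fun q => q \in c @^-1: X))).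
by apply: rep_iso_kpred => q; rewrite inE.
Qed.

Lemma convex_preimset (X : {set TP}) : convex leP X -> convex leQ (c @^-1: X).
Proof.
move=> convX a b d; rewrite !inE => Xa Xd /c_homo lab /c_homo lbd.
exact: convX Xa Xd lab lbd.
Qed.

Lemma restrict_spread_decomposable M :
  spread_decomposable leP M -> spread_decomposable leQ (restrict M).
Proof.
move=> [ss [spread_ss Mss]]; apply: spread_decomposable_iso (restrict_iso Mss) _.
rewrite restrict_bigsum -map_comp; apply: spread_decomposable_bigsum => X ssX.
apply: spread_decomposable_iso (restrict_krep X) _.
by apply/krep_convex_spread_decomposable/convex_preimset; case: (spread_ss X ssX).
Qed.

End Restriction.

Lemma convex_upset_diff (T : finType) (le : rel T) (A B : {set T}) :
  transitive le -> convex le (upset le A :\: upset le B).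
Proof.
move=> le_trans a b d; rewrite !inE => /andP [_ /existsP [x /andP [Ax lxa]]].
move=> /andP [Bd _] lab lbd; apply/andP; split.
  apply: contra Bd => /existsP [y /andP [By lyb]].
  by apply/existsP; exists y; rewrite By (le_trans _ _ _ lyb lbd).
by apply/existsP; exists x; rewrite Ax (le_trans _ _ _ lxa lab).
Qed.

Section GaloisConnection.
Variables (F : fieldType) (TP TQ : finType) (leP : rel TP) (leQ : rel TQ).
Variables (fl : TP -> TQ) (c : TQ -> TP).
Hypotheses (leP_refl : reflexive leP) (leP_trans : transitive leP).
Hypotheses (leQ_refl : reflexive leQ) (leQ_trans : transitive leQ).
Hypothesis galois : forall p q, leQ (fl p) q = leP p (c q).

Lemma le_unit p : leP p (c (fl p)).
Proof. by rewrite -galois leQ_refl. Qed.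

Lemma le_counit q : leQ (fl (c q)) q.
Proof. by rewrite galois leP_refl. Qed.

Lemma fl_homo : {homo fl : p p' / leP p p' >-> leQ p p'}.
Proof. by move=> p p' lpp'; rewrite galois (leP_trans lpp' (le_unit p')). Qed.

Lemma c_homo : {homo c : q q' / leQ q q' >-> leP q q'}.
Proof. by move=> q q' lqq'; rewrite -galois (leQ_trans (le_counit q) lqq'). Qed.

Definition restrict_unit (M : repd F TP) p : 'M[F]_(rdim M p, rdim (restrict c M) (fl p)) :=
  rmap M p (c (fl p)).

(* The unit is M (p <= c (fl p)); the mate of f : M -> Lan N is, at q,
   f (c q) followed by N (fl (c q) <= q). *)
Lemma restrict_left_adjoint : left_adjoint_of_Lan leQ leP restrict_unit.
Proof.
move=> M repM; have [M1 Mmul] := repM; split.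
- exact (restrict_is_rep c_homo repM).
- move=> p p' lpp'; rewrite /restrict_unit /=.
  rewrite -(Mmul _ _ _ lpp' (le_unit p')).
  by rewrite -(Mmul _ _ _ (le_unit p) (c_homo (fl_homo lpp'))).
- move=> N [N1 Nmul] f hom_f.
  exists (fun q => f (c q) *m rmap N (fl (c q)) q); split.
  + move=> q q' lqq' /=; rewrite mulmxA hom_f ?c_homo // -!mulmxA.
    rewrite -(Nmul _ _ _ (fl_homo (c_homo lqq')) (le_counit q')).
    by rewrite -(Nmul _ _ _ (le_counit q) lqq').
  + move=> p; rewrite /restrict_unit mulmxA hom_f ?le_unit // -mulmxA /=.
    by rewrite -(Nmul _ _ _ (fl_homo (le_unit p)) (le_counit (fl p))) N1 mulmx1.
  + move=> g hom_g eta_g q; rewrite -eta_g /restrict_unit -mulmxA -hom_g ?le_counit //=.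
    by rewrite mulmxA -(Mmul _ _ _ (le_unit (c q)) (c_homo (le_counit q))) M1 mul1mx.
Qed.

Lemma preimset_upset (A : {set TP}) : c @^-1: upset leP A = upset leQ (fl @: A).
Proof.
apply/setP=> q; rewrite !inE; apply/existsP/existsP => [[a /andP [Aa la]]|].
  by exists (fl a); rewrite imset_f //= galois.
by move=> [_ /andP [/imsetP [a Aa ->] la]]; exists a; rewrite Aa -galois.
Qed.

End GaloisConnection.

Lemma gle_refl n (m : 'I_n -> nat) : reflexive (@gle n m).
Proof. by move=> p; apply/forallP. Qed.

Lemma gle_trans n (m : 'I_n -> nat) : transitive (@gle n m).
Proof.
move=> q p r /forallP pq /forallP qr; apply/forallP => i.
exact: leq_trans (pq i) (qr i).
Qed.

Lemma ord_inj_homo_mono m k (f : 'I_m -> 'I_k) :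
  injective f -> {homo f : a b / (a <= b)%N} -> {mono f : a b / (a <= b)%N}.
Proof. by move=> f_inj f_homo; apply: le_mono; apply: inj_homo_lt. Qed.

Section GridFloor.
Variables (n : nat) (mQ mP : 'I_n -> nat) (iota : forall i, 'I_(mQ i) -> 'I_(mP i)).
Arguments iota : clear implicits.
Variable fl : gpt mP -> gpt mQ.
Hypothesis iota_aligned : aligned_grid_inclusion iota.
Hypothesis iota_cofinal : upset (@gle n mP) [set gincl iota q | q : gpt mQ] = [set: gpt mP].
Hypothesis fl_floor : is_floor iota fl.

Lemma leq_iota (i : 'I_n) : {mono iota i : a b / (a <= b)%N}.
Proof. by have [inj homo] := iota_aligned i; apply: ord_inj_homo_mono. Qed.

Definition set_coord i (q : gpt mQ) (y : 'I_(mQ i)) : gpt mQ :=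
  [ffun j => dfwith (fun k => q k) y j].

Lemma set_coord_eq i q (y : 'I_(mQ i)) : set_coord q y i = y.
Proof. by rewrite ffunE dfwith_in. Qed.

Lemma set_coord_neq i q (y : 'I_(mQ i)) j : i != j -> set_coord q y j = q j.
Proof. by move=> ij; rewrite ffunE dfwith_out. Qed.

(* In coordinate i the join fl p cannot exceed the largest i-th coordinate of
   the points below p, which exist by cofinality. *)
Lemma floor_le p : gle (gincl iota (fl p)) p.
Proof.
apply/forallP=> i; rewrite ffunE.
have : p \in upset (@gle n mP) [set gincl iota q | q : gpt mQ] by rewrite iota_cofinal inE.
rewrite inE => /existsP [_ /andP [/imsetP [q0 _ ->] q0p]].
have [qi qi_p qi_max] :=
  @arg_maxnP _ q0 (fun q => gle (gincl iota q) p) (fun q => nat_of_ord (q i)) q0p.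
have : gle (fl p) (set_coord (fl p) (qi i)).
  apply: (proj2 (fl_floor p)) => q qp; apply/forallP => j.
  have [<-|ij] := eqVneq i j; first by rewrite set_coord_eq; apply: qi_max.
  by rewrite set_coord_neq //; move/forallP: (proj1 (fl_floor p) q qp); apply.
move/forallP => /(_ i); rewrite set_coord_eq -leq_iota => /leq_trans; apply.
by move/forallP: qi_p => /(_ i); rewrite ffunE.
Qed.

Lemma leq_floor p i (y : 'I_(mQ i)) : (y <= fl p i)%N = (iota i y <= p i)%N.
Proof.
apply/idP/idP => [yp|iyp].
  rewrite -leq_iota in yp; apply: leq_trans yp _.
  by move/forallP: (floor_le p) => /(_ i); rewrite ffunE.
have : gle (set_coord (fl p) y) (fl p).
  apply: (proj1 (fl_floor p)); apply/forallP => j; rewrite ffunE.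
  have [<-|ij] := eqVneq i j; first by rewrite set_coord_eq.
  by rewrite set_coord_neq //; move/forallP: (floor_le p) => /(_ j); rewrite ffunE.
by move/forallP => /(_ i); rewrite set_coord_eq.
Qed.

Definition below_floor_coord i (b : 'I_(mQ i)) (x : 'I_(mP i)) :=
  [forall y : 'I_(mQ i), (iota i y <= x)%N ==> (y <= b)%N].

Definition ceil_coord i (b : 'I_(mQ i)) : 'I_(mP i) :=
  [arg max_(x > iota i b | below_floor_coord b x) (x : nat)].

Definition grid_ceil (q : gpt mQ) : gpt mP := [ffun i => ceil_coord (q i)].

Lemma below_floor_coordP i (b : 'I_(mQ i)) (x : 'I_(mP i)) :
  reflect (forall y, (iota i y <= x)%N -> (y <= b)%N) (below_floor_coord b x).
Proof. by apply: (iffP forallP) => h y; apply/implyP/h. Qed.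

Lemma leq_ceil_coord i (b : 'I_(mQ i)) (x : 'I_(mP i)) :
  (x <= ceil_coord b)%N = below_floor_coord b x.
Proof.
rewrite /ceil_coord; case: arg_maxnP => [|m bm m_max].
  by apply/below_floor_coordP => y; rewrite leq_iota.
apply/idP/idP => [xm|]; last exact: m_max.
by apply/below_floor_coordP => y yx; move/below_floor_coordP: bm; apply; apply: leq_trans xm.
Qed.

Lemma grid_galois p q : gle (fl p) q = gle p (grid_ceil q).
Proof.
apply/forallP/forallP => le_pq i.
  rewrite ffunE leq_ceil_coord; apply/below_floor_coordP => y.
  by rewrite -leq_floor => /leq_trans; apply.
have := le_pq i; rewrite ffunE leq_ceil_coord => /below_floor_coordP; apply.
by rewrite -leq_floor.
Qed.

End GridFloor.

Theorem mainTheorem11 (F : fieldType) (n : nat) (mQ mP : 'I_n -> nat)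
  (iota : forall i, 'I_(mQ i) -> 'I_(mP i)) (fl : gpt mP -> gpt mQ) :
  aligned_grid_inclusion iota ->
  upset (@gle n mP) [set gincl iota q | q : gpt mQ] = [set: gpt mP] ->
  is_floor iota fl ->
  (exists (C : repd F (gpt mP) -> repd F (gpt mQ))
          (eta : forall M : repd F (gpt mP), forall p,
                   'M[F]_(rdim M p, rdim (C M) (fl p))),
      @left_adjoint_of_Lan F _ _ (@gle n mQ) (@gle n mP) fl C eta) /\
  (forall (C : repd F (gpt mP) -> repd F (gpt mQ))
          (eta : forall M : repd F (gpt mP), forall p,
                   'M[F]_(rdim M p, rdim (C M) (fl p))),
      @left_adjoint_of_Lan F _ _ (@gle n mQ) (@gle n mP) fl C eta ->
      (forall A B : {set gpt mP},
          (forall b, b \in B -> exists2 a, a \in A & gle a b) ->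
          rep_iso (@gle n mQ)
            (C (krep F (upset (@gle n mP) A :\: upset (@gle n mP) B)))
            (krep F (upset (@gle n mQ) (fl @: A) :\: upset (@gle n mQ) (fl @: B))))
      /\
      (forall M : repd F (gpt mP), is_rep (@gle n mP) M ->
          spread_decomposable (@gle n mP) M ->
          spread_decomposable (@gle n mQ) (C M))).
Proof.
move=> iota_aligned iota_cofinal fl_floor.
set c := grid_ceil iota.
have galois := grid_galois iota_aligned iota_cofinal fl_floor.
have ceil_homo := c_homo (@gle_refl n mP) (@gle_trans n mQ) galois.
have restrict_adj := restrict_left_adjoint (F := F) (@gle_refl n mP)
  (@gle_trans n mP) (@gle_refl n mQ) (@gle_trans n mQ) galois.
split; first by exists (restrict c), (restrict_unit fl c).
move=> C eta C_adj.
have C_restrict := left_adjoint_of_Lan_unique C_adj restrict_adj.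
split=> [A B _ | M M_rep M_sd].
- have rep_AB := krep_is_rep F (@convex_upset_diff _ _ A B (@gle_trans n mP)).
  apply: rep_iso_trans (C_restrict _ rep_AB) _.
  apply: rep_iso_trans (restrict_krep F (@gle n mQ) c _) _.
  by rewrite preimsetD !(preimset_upset galois); apply: rep_iso_refl.
- apply: spread_decomposable_iso (C_restrict _ M_rep) _.
  exact (restrict_spread_decomposable ceil_homo M_sd).
Qed.
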